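(* The ideal $\mathfrak m$ of $A$ is stable under the action of $\mathfrak h\subset\mathfrak q\times\mathfrak q$.
   Context: Fix $\zeta\in\mathbb{C}$ with $\zeta^2=-1$. Let $\mathbf{V}=\mathbb{C}^{\infty|\infty}$ with even basis $\{e_i\}$, odd basis $\{f_i\}$, odd involution $\alpha(e_i)=f_i,\alpha(f_i)=e_i$. $\mathfrak q$ is the infinite queer Lie superalgebra of finitary matrices $\begin{pmatrix} a & b\\ -b & a\end{pmatrix}$ acting on $\mathbf V$ (basis order: $e$'s then $f$'s), and $\mathfrak q\times\mathfrak q$ acts on $\mathbf V\otimes\mathbf V$ with Koszul signs. $\mathbf U$ is the $\zeta$-eigenspace of $\alpha\otimes\alpha$ on $\mathbf V\otimes\mathbf V$, stable under $\mathfrak q\times\mathfrak q$, with basis $v_{i,j}=(1+\zeta)e_i\otimes e_j+(1-\zeta)f_i\otimes f_j$ and $w_{i,j}=(1+\zeta)e_i\otimes f_j+(1-\zeta)f_i\otimes e_j$. $A=\mathrm{Sym}(\mathbf U)$ is the polynomial superalgebra in even $x_{i,j}$ and odd $y_{i,j}$ corresponding to $v_{i,j},w_{i,j}$, with $\mathfrak q\times\mathfrak q$ acting by superderivations extending its action on $\mathbf U$. $\mathfrak m$ is the ideal generated by all $x_{i,j}-\delta_{i,j}$ and $y_{i,j}$. The Chevalley automorphism is $\tau\begin{pmatrix} a & b\\ -b & a\end{pmatrix}=-\begin{pmatrix} a^t & \zeta b^t\\ -\zeta b^t & a^t\end{pmatrix}$, and $\mathfrak h=\{(\tau g,g):g\in\mathfrak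 q\}$. *)

From mathcomp Require Import all_boot all_algebra.
From mathcomp Require Import reals.
From Stdlib Require Lists.List.
From mathcomp.real_closed Require Import complex.

Set Implicit Arguments.
Unset Strict Implicit.
Unset Printing Implicit Defensive.
Import GRing.Theory.
Local Open Scope ring_scope.

Section QueerSym.
Variable R : realType.
Local Notation C := (R[i]).

(* The queer Lie superalgebra q of finitary matrices [[a, b], [-b, a]] *)

Definition finitary (a : nat -> nat -> C) : Prop :=
  exists N : nat, forall i j, (N <= i)%N || (N <= j)%N -> a i j = 0.

(* an element of q is encoded by the pair (a, b) of its blocks *)
Definition qelt := ((nat -> nat -> C) * (nat -> nat -> C))%type.

(* basis of V = C^{oo|oo}: (false, i) is e_i (even), (true, i) is f_i (odd);
   basis order e's then f's *)
Definition vidx := (bool * nat)%type.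

(* matrix entry in row u', column u of [[a, b], [-b, a]]:
   g (basis u) = sum_{u'} qM g u' u (basis u') *)
Definition qM (g : qelt) (u' u : vidx) : C :=
  match u'.1, u.1 with
  | false, false => g.1 u'.2 u.2
  | false, true  => g.2 u'.2 u.2
  | true,  false => - g.2 u'.2 u.2
  | true,  true  => g.1 u'.2 u.2
  end.

Definition qeven (g : qelt) : qelt := (g.1, fun _ _ => 0).
Definition qodd (g : qelt) : qelt := (fun _ _ => 0, g.2).

Definition tau (zeta : C) (g : qelt) : qelt :=
  (fun i j => - g.1 j i, fun i j => - (zeta * g.2 j i)).

Definition tens := (vidx * vidx -> C)%type.

(* coefficient at u' (x) v' of (g1, g2) . (u (x) v), where
   (g1,g2).(u (x) v) = g1 u (x) v + (-1)^{|g2||u|} u (x) g2 v,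
   linearised over the homogeneous matrix units of g2 (the unit E_{v',v}
   has parity v'.1 xor v.1). *)
Definition actB (g1 g2 : qelt) (uv : vidx * vidx) (uv' : vidx * vidx) : C :=
  (uv'.2 == uv.2)%:R * qM g1 uv'.1 uv.1
  + (uv'.1 == uv.1)%:R * (-1) ^+ (uv.1.1 && (uv'.2.1 != uv.2.1))
      * qM g2 uv'.2 uv.2.

(* (g1,g2) . v_{k,l}  where v_{k,l} = (1+zeta) e_k(x)e_l + (1-zeta) f_k(x)f_l *)
Definition actV (zeta : C) (g1 g2 : qelt) (k l : nat) : tens :=
  fun uv' => (1 + zeta) * actB g1 g2 ((false, k), (false, l)) uv'
           + (1 - zeta) * actB g1 g2 ((true, k), (true, l)) uv'.

(* (g1,g2) . w_{k,l}  where w_{k,l} = (1+zeta) e_k(x)f_l + (1-zeta) f_k(x)e_l *)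
Definition actW (zeta : C) (g1 g2 : qelt) (k l : nat) : tens :=
  fun uv' => (1 + zeta) * actB g1 g2 ((false, k), (true, l)) uv'
           + (1 - zeta) * actB g1 g2 ((true, k), (false, l)) uv'.

Definition pidx := (nat * nat)%type.
Definition lexle (a b : pidx) : bool := (a.1 < b.1)%N || ((a.1 == b.1) && (a.2 <= b.2)%N).
Definition lexlt (a b : pidx) : bool := (a.1 < b.1)%N || ((a.1 == b.1) && (a.2 < b.2)%N).

(* a super monomial x^E y_O: E is a multiset of indices of even variables
   (nondecreasing list), O a set of indices of odd variables (increasing list);
   the monomial is x_{E_1} ... x_{E_r} y_{O_1} ... y_{O_s}. *)
Definition smon := (seq pidx * seq pidx)%type.
Definition canon (m : smon) : bool := sorted lexle m.1 && sorted lexlt m.2.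

Definition Alg := (smon -> C)%type.

Definition wf (f : Alg) : Prop :=
  (forall m, ~~ canon m -> f m = 0) /\
  exists s : seq smon, forall m, f m != 0 -> m \in s.

Definition homog (p : bool) (f : Alg) : Prop :=
  forall m, f m != 0 -> odd (size m.2) = p.

Definition sym_zero : Alg := fun _ => 0.
Definition sym_add (f g : Alg) : Alg := fun m => f m + g m.
Definition sym_scale (c : C) (f : Alg) : Alg := fun m => c * f m.
Definition sym_one : Alg := fun m => (m == ([::], [::]))%:R.
Definition X (k l : nat) : Alg := fun m => (m == ([:: (k, l)], [::]))%:R.
Definition Y (k l : nat) : Alg := fun m => (m == ([::], [:: (k, l)]))%:R.

Fixpoint allmasks (n : nat) : seq bitseq :=
  if n is n'.+1 then [seq b :: s | b <- [:: true; false], s <- allmasks n']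
  else [:: [::]].

Fixpoint ninv (mu : bitseq) : nat :=
  if mu is x :: mu' then ((if x then 0 else count id mu') + ninv mu')%N else 0%N.

Definition evsplits (E : seq pidx) : seq (seq pidx * seq pidx) :=
  undup [seq (mask mu E, mask (map negb mu) E) | mu <- allmasks (size E)].

(* supercommutative product:
   (x^E1 y_O1)(x^E2 y_O2) = x^(E1+E2) y_O1 y_O2, and
   y_O1 y_O2 = (-1)^{#{(a,b) in O1 x O2 | b < a}} y_(O1 u O2) (0 if O1, O2 meet) *)
Definition sym_mul (f g : Alg) : Alg := fun m =>
  if canon m then
    \sum_(sp <- evsplits m.1) \sum_(mu <- allmasks (size m.2))
       (-1) ^+ ninv mu * f (sp.1, mask mu m.2) * g (sp.2, mask (map negb mu) m.2)
  else 0.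

Definition sym_sum (s : seq Alg) : Alg := foldr sym_add sym_zero s.

Definition mgen (g : Alg) : Prop :=
  (exists k l, g = sym_add (X k l) (sym_scale (- (k == l)%:R) sym_one)) \/
  (exists k l, g = Y k l).

Definition in_m (f : Alg) : Prop :=
  exists s : seq (Alg * Alg),
    Stdlib.Lists.List.Forall (fun c : Alg * Alg => wf c.1 /\ mgen c.2) s /\ f = sym_sum [seq sym_mul c.1 c.2 | c <- s].

Definition superder (p : bool) (D : Alg -> Alg) : Prop :=
  (forall f, wf f -> wf (D f)) /\
  (forall f g, wf f -> wf g -> D (sym_add f g) = sym_add (D f) (D g)) /\
  (forall c f, wf f -> D (sym_scale c f) = sym_scale c (D f)) /\
  (forall q f g, wf f -> wf g -> homog q f ->
     D (sym_mul f g) = sym_add (sym_mul (D f) g) (sym_scale ((-1) ^+ (p && q)) (sym_mul f (D g)))).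

(* identification U ~ degree one part of A: an element t of U, written
   sum c_{kl} v_{kl} + d_{kl} w_{kl}, is sent to sum c_{kl} x_{kl} + d_{kl} y_{kl};
   here c_{kl} = (coefficient of e_k (x) e_l in t) / (1 + zeta) and
   d_{kl} = (coefficient of e_k (x) f_l in t) / (1 + zeta). *)
Definition iotaU (zeta : C) (t : tens) : Alg := fun m =>
  match m with
  | ([:: kl], [::]) => t ((false, kl.1), (false, kl.2)) / (1 + zeta)
  | ([::], [:: kl]) => t ((false, kl.1), (true, kl.2)) / (1 + zeta)
  | _ => 0
  end.

Definition extends_on_U (zeta : C) (g1 g2 : qelt) (D : Alg -> Alg) : Prop :=
  forall k l, D (X k l) = iotaU zeta (actV zeta g1 g2 k l) /\
              D (Y k l) = iotaU zeta (actW zeta g1 g2 k l).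

End QueerSym.

(* The ideal m is the ideal of the point x_ij = delta_ij, y_ij = 0.  A superderivation D maps
   m into itself as soon as it maps every generator of m into the linear span of the generators:
   m is spanned by products c g with g a generator, and D (c g) = (D c) g +- c (D g).  Since D
   extends the action on U, D x_kl and D y_kl are linear forms in the x_ij and y_ij, and such a
   form is a combination of the generators x_ij - delta_ij, y_ij iff its value at the point, the
   trace of its x-coefficients, vanishes.  For (tau g, g) with g = [[a, b], [-b, a]] these traces
   are (1 + zeta) (a_kl - a_kl) on v_kl and ((1 + zeta) - zeta (1 - zeta)) b_kl = (1 + zeta^2) b_kl
   on w_kl, both zero. *)

From mathcomp Require Import all_boot all_algebra.
From mathcomp Require Import reals.
From mathcomp.real_closed Require Import complex.
From mathcomp Require Import zify ring.
From Stdlib Require Import FunctionalExtensionality.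
From Stdlib Require Lists.List.
Import GRing.Theory.
Local Open Scope ring_scope.
Set Implicit Arguments.
Unset Strict Implicit.

Lemma big_seq_only (T : eqType) (V : nmodType) (r : seq T) x (F : T -> V) :
  uniq r -> x \in r -> (forall y, y \in r -> y != x -> F y = 0) ->
  \sum_(y <- r) F y = F x.
Proof.
move=> r_uniq xr F0; rewrite (bigD1_seq x) //= big1_seq ?addr0 //.
by move=> y /andP [yx yr]; apply: F0.
Qed.
Arguments big_seq_only {T V r} x {F}.

Lemma sum_neq0P (T : eqType) (V : nmodType) (r : seq T) (F : T -> V) :
  \sum_(x <- r) F x != 0 -> exists2 x, x \in r & F x != 0.
Proof.
move=> hF; apply/hasP; apply: contraNT hF => /hasPn F0.
by rewrite big1_seq // => x /andP [_ /F0 /negPn /eqP].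
Qed.

Lemma Forall_map_all (T U : Type) (P : U -> Prop) (f : T -> U) (s : seq T) :
  (forall x, P (f x)) -> List.Forall P (map f s).
Proof. by move=> Pf; elim: s => [|x s IH] /=; constructor. Qed.

Section SuperPolynomials.
Variable R : realType.
Local Notation C := (R[i]).
Local Notation Alg := (Alg R).
Local Notation sym_one := (@sym_one R).
Local Notation sym_zero := (@sym_zero R).
Local Notation sym_sum := (@sym_sum R).
Implicit Types (f g h : Alg) (c : C).

Lemma sym_add0 f : sym_add f sym_zero = f.
Proof. by apply: functional_extensionality => m; rewrite /sym_add addr0. Qed.

Lemma sym_addA f g h : sym_add f (sym_add g h) = sym_add (sym_add f g) h.
Proof. by apply: functional_extensionality => m; rewrite /sym_add addrA. Qed.

Lemma sym_sum_cat s1 s2 : sym_sum (s1 ++ s2) = sym_add (sym_sum s1) (sym_sum s2).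
Proof.
elim: s1 => [|f s IH] /=; last by rewrite IH sym_addA.
by apply: functional_extensionality => m; rewrite /sym_add add0r.
Qed.

Lemma sym_sumE s m : sym_sum s m = \sum_(f <- s) f m.
Proof. by elim: s => [|f s IH]; rewrite ?big_nil ?big_cons //= /sym_add IH. Qed.

Lemma sym_scale0 c : sym_scale c sym_zero = sym_zero.
Proof. by apply: functional_extensionality => m; rewrite /sym_scale mulr0. Qed.

Lemma sym_scaleDr c f g :
  sym_scale c (sym_add f g) = sym_add (sym_scale c f) (sym_scale c g).
Proof. by apply: functional_extensionality => m; rewrite /sym_scale /sym_add mulrDr. Qed.

Lemma sym_mulDl f1 f2 g :
  sym_mul (sym_add f1 f2) g = sym_add (sym_mul f1 g) (sym_mul f2 g).
Proof.
apply: functional_extensionality => m; rewrite /sym_mul /sym_add.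
case: (canon m); last by rewrite addr0.
rewrite -big_split; apply: eq_bigr => sp _; rewrite -big_split.
by apply: eq_bigr => mu _; rewrite mulrDr mulrDl.
Qed.

Lemma sym_mulDr f g1 g2 :
  sym_mul f (sym_add g1 g2) = sym_add (sym_mul f g1) (sym_mul f g2).
Proof.
apply: functional_extensionality => m; rewrite /sym_mul /sym_add.
case: (canon m); last by rewrite addr0.
rewrite -big_split; apply: eq_bigr => sp _; rewrite -big_split.
by apply: eq_bigr => mu _; rewrite mulrDr.
Qed.

Lemma sym_mul0r f : sym_mul f sym_zero = sym_zero.
Proof.
apply: functional_extensionality => m; rewrite /sym_mul /sym_zero.
by case: (canon m) => //; rewrite big1 // => sp _; rewrite big1 // => mu _; rewrite mulr0.
Qed.

Lemma sym_scale_mull c f g : sym_scale c (sym_mul f g) = sym_mul (sym_scale c f) g.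
Proof.
apply: functional_extensionality => m; rewrite /sym_mul /sym_scale.
case: (canon m); last by rewrite mulr0.
rewrite mulr_sumr; apply: eq_bigr => sp _; rewrite mulr_sumr.
by apply: eq_bigr => mu _; rewrite !mulrA [c * _]mulrC.
Qed.

Lemma sym_mulZr f c g : sym_mul f (sym_scale c g) = sym_mul (sym_scale c f) g.
Proof.
apply: functional_extensionality => m; rewrite /sym_mul /sym_scale.
case: (canon m) => //; apply: eq_bigr => sp _; apply: eq_bigr => mu _.
by rewrite mulrCA !mulrA [c * _]mulrC.
Qed.

Lemma mem_allmasks n mu : (mu \in allmasks n) = (size mu == n).
Proof.
elim: n mu => [|n IH] [|b mu] //=; rewrite cats0 mem_cat.
  by apply/norP; split; apply/mapP => -[].
rewrite eqSS -IH; have cons_inj b0 : injective (cons b0) by move=> s t [].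
have [t_notin_f f_notin_t] : (true :: mu \notin [seq false :: s | s <- allmasks n])
   /\ (false :: mu \notin [seq true :: s | s <- allmasks n]).
  by split; apply/mapP => -[].
by case: b; rewrite mem_map ?(negbTE t_notin_f) ?(negbTE f_notin_t) ?orbF //; apply: cons_inj.
Qed.

Lemma uniq_allmasks n : uniq (allmasks n).
Proof.
elim: n => [|n IH] //=; rewrite cats0 cat_uniq !map_inj_uniq //; try by move=> s t [].
by rewrite IH /= andbT; apply/hasPn => _ /mapP [s _ ->]; apply/mapP => -[].
Qed.

Lemma ninv_nseq n b : ninv (nseq n b) = 0%N.
Proof. by case: b; elim: n => //= n ->; rewrite ?count_nseq ?mul0n. Qed.

Lemma mask_eq_nil (T : eqType) (s : seq T) mu :
  size mu = size s -> (mask mu s == [::]) = (mu == nseq (size s) false).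
Proof.
elim: s mu => [|x s IH] [|b mu] //= [hs].
by case: b; rewrite eqseq_cons ?IH.
Qed.

Lemma mask_negb_eq_nil (T : eqType) (s : seq T) mu :
  size mu = size s -> (mask (map negb mu) s == [::]) = (mu == nseq (size s) true).
Proof.
move=> hs; rewrite mask_eq_nil ?size_map // -[false]/(~~ true) -map_nseq.
exact: (inj_eq (inj_map (can_inj negbK))).
Qed.

Lemma evsplits_mask E nu :
  size nu = size E -> (mask nu E, mask (map negb nu) E) \in evsplits E.
Proof. by move=> hnu; rewrite mem_undup; apply: map_f; rewrite mem_allmasks hnu. Qed.

Lemma evsplitsP E sp : sp \in evsplits E ->
  exists2 nu, size nu = size E & sp = (mask nu E, mask (map negb nu) E).
Proof.
by rewrite mem_undup => /mapP [nu hnu ->]; exists nu => //; apply/eqP; rewrite -mem_allmasks.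
Qed.

Lemma sym_oneE m : sym_one m = ((m.1 == [::]) && (m.2 == [::]))%:R.
Proof. by case: m. Qed.

Lemma sym_mulr1 h : wf h -> sym_mul h sym_one = h.
Proof.
move=> [hc _]; apply: functional_extensionality => -[E O]; rewrite /sym_mul /=.
case: ifPn => [_|/hc -> //].
have E_split := evsplits_mask (size_nseq (size E) true).
rewrite mask_true ?size_nseq // map_nseq mask_false in E_split.
rewrite (big_seq_only (E, [::])) ?undup_uniq //; last first.
  move=> _ /evsplitsP [nu hnu ->]; have [->|nu_ne _] := eqVneq nu (nseq (size E) true).
    by rewrite mask_true ?size_nseq // map_nseq mask_false eqxx.
  by rewrite big1 // => mu _; rewrite sym_oneE /= mask_negb_eq_nil // (negbTE nu_ne) mulr0.
rewrite (big_seq_only (nseq (size O) true)) ?uniq_allmasks ?mem_allmasks ?size_nseq //=.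
  by rewrite ninv_nseq mask_true ?size_nseq // map_nseq mask_false sym_oneE /= mulr1 mul1r.
move=> mu; rewrite mem_allmasks => /eqP hmu mu_ne.
by rewrite sym_oneE /= mask_negb_eq_nil // (negbTE mu_ne) mulr0.
Qed.

Lemma sym_mul1r h : wf h -> sym_mul sym_one h = h.
Proof.
move=> [hc _]; apply: functional_extensionality => -[E O]; rewrite /sym_mul /=.
case: ifPn => [_|/hc -> //].
have E_split := evsplits_mask (size_nseq (size E) false).
rewrite mask_false map_nseq mask_true ?size_nseq // in E_split.
rewrite (big_seq_only ([::], E)) ?undup_uniq //; last first.
  move=> _ /evsplitsP [nu hnu ->]; have [->|nu_ne _] := eqVneq nu (nseq (size E) false).
    by rewrite mask_false map_nseq mask_true ?size_nseq // eqxx.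
  by rewrite big1 // => mu _; rewrite sym_oneE /= mask_eq_nil // (negbTE nu_ne) mulr0 mul0r.
rewrite (big_seq_only (nseq (size O) false)) ?uniq_allmasks ?mem_allmasks ?size_nseq //=.
  by rewrite ninv_nseq mask_false map_nseq mask_true ?size_nseq // sym_oneE /= !mul1r.
move=> mu; rewrite mem_allmasks => /eqP hmu mu_ne.
by rewrite sym_oneE /= mask_eq_nil // (negbTE mu_ne) mulr0 mul0r.
Qed.

Lemma wf_zero : wf sym_zero.
Proof. by split=> //; exists [::] => m; rewrite eqxx. Qed.

Lemma wf_monomial m0 : canon m0 -> wf (fun m => (m == m0)%:R : C).
Proof.
move=> m0_canon; split=> [m|]; first by have [->|] := eqVneq m m0; rewrite ?m0_canon.
by exists [:: m0] => m; have [->|] := eqVneq m m0; rewrite ?inE ?eqxx.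
Qed.

Lemma wf_one : wf sym_one. Proof. exact: wf_monomial. Qed.
Lemma wf_X k l : wf (X R k l). Proof. exact: wf_monomial. Qed.
Lemma wf_Y k l : wf (Y R k l). Proof. exact: wf_monomial. Qed.

Lemma wf_add f g : wf f -> wf g -> wf (sym_add f g).
Proof.
move=> [f_canon [sf f_supp]] [g_canon [sg g_supp]]; split.
  by move=> m hm; rewrite /sym_add f_canon // g_canon // addr0.
exists (sf ++ sg) => m; rewrite /sym_add mem_cat.
have [-> | /f_supp -> //] := eqVneq (f m) 0.
by rewrite add0r => /g_supp ->; rewrite orbT.
Qed.

Lemma wf_scale c f : wf f -> wf (sym_scale c f).
Proof.
move=> [f_canon [sf f_supp]]; split=> [m hm|]; first by rewrite /sym_scale f_canon // mulr0.
by exists sf => m; rewrite /sym_scale => hm; apply: f_supp; apply: contraNneq hm => ->; rewrite mulr0.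
Qed.

Lemma wf_mgen g : mgen g -> wf g.
Proof.
case=> [[k [l ->]]|[k [l ->]]]; last exact: wf_Y.
by apply: wf_add; [exact: wf_X | apply: wf_scale; exact: wf_one].
Qed.

Lemma perm_mask_split (T : eqType) (s : seq T) nu :
  size nu = size s -> perm_eq s (mask nu s ++ mask (map negb nu) s).
Proof.
elim: s nu => [|x s IH] [|b nu] //= [hs]; case: b => /=; first by rewrite perm_cons IH.
by rewrite perm_sym -cat1s perm_catCA perm_cons perm_sym IH.
Qed.

Lemma wf_mul f g : wf f -> wf g -> wf (sym_mul f g).
Proof.
move=> [_ [sf f_supp]] [_ [sg g_supp]]; split=> [m /negbTE hm|]; first by rewrite /sym_mul hm.
exists (flatten [seq [seq (e, o) | e <- permutations (x.1 ++ y.1), o <- permutations (x.2 ++ y.2)]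
                | x <- sf, y <- sg]).
move=> [E O]; rewrite /sym_mul /=; case: ifP => _; last by rewrite eqxx.
move=> /sum_neq0P [_ /evsplitsP [nu hnu ->] /sum_neq0P [mu]].
rewrite mem_allmasks => /eqP hmu.
set xf := (mask nu E, mask mu O); set yg := (mask (map negb nu) E, mask (map negb mu) O).
move=> hne; have xf_in : xf \in sf.
  by apply: f_supp; apply: contraNneq hne => ->; rewrite mulr0 mul0r.
have yg_in : yg \in sg by apply: g_supp; apply: contraNneq hne => ->; rewrite mulr0.
apply/flattenP; exists [seq (e, o) | e <- permutations (xf.1 ++ yg.1),
                                    o <- permutations (xf.2 ++ yg.2)].
  by apply/allpairsP; exists (xf, yg).
by apply/allpairsP; exists (E, O); rewrite !mem_permutations !perm_mask_split.
Qed.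

Definition sym_part (p : bool) f : Alg := fun m => if odd (size m.2) == p then f m else 0.

Lemma wf_part p f : wf f -> wf (sym_part p f).
Proof.
move=> [f_canon [sf f_supp]]; split=> [m hm|]; first by rewrite /sym_part f_canon ?if_same.
by exists sf => m; rewrite /sym_part; case: ifP => _; [exact: f_supp | rewrite eqxx].
Qed.

Lemma homog_part p f : homog p (sym_part p f).
Proof. by move=> m; rewrite /sym_part /=; have [->|_] := eqVneq (odd (size m.2)) p; rewrite ?eqxx. Qed.

Lemma sym_add_parts f : f = sym_add (sym_part false f) (sym_part true f).
Proof.
apply: functional_extensionality => m; rewrite /sym_add /sym_part.
by case: (odd _); rewrite ?add0r ?addr0.
Qed.

End SuperPolynomials.

Section IdealOfThePoint.
Variable R : realType.
Local Notation C := (R[i]).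
Local Notation Alg := (Alg R).
Local Notation sym_zero := (@sym_zero R).
Local Notation sym_sum := (@sym_sum R).
Local Notation in_m := (@in_m R).
Local Notation mgen := (@mgen R).
Implicit Types (f g h : Alg) (c : C).

Lemma in_m0 : in_m sym_zero.
Proof. by exists [::]. Qed.

Lemma in_mD f g : in_m f -> in_m g -> in_m (sym_add f g).
Proof.
move=> [s1 [s1_gen ->]] [s2 [s2_gen ->]]; exists (s1 ++ s2).
by rewrite map_cat sym_sum_cat; split=> //; apply/List.Forall_app.
Qed.

Lemma in_m_mul_mgen h g : wf h -> mgen g -> in_m (sym_mul h g).
Proof.
move=> wh hg; exists [:: (h, g)]; rewrite /= sym_add0.
by split=> //; apply: List.Forall_cons (List.Forall_nil _).
Qed.

Lemma in_mZ c f : in_m f -> in_m (sym_scale c f).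
Proof.
move=> [s [+ ->]]; elim: s => [|[h g] s IH] /=; first by rewrite sym_scale0 => _; exact: in_m0.
case/List.Forall_cons_iff => -[wh hg] s_gen; rewrite sym_scaleDr sym_scale_mull.
by apply: in_mD; [apply: in_m_mul_mgen; first exact: wf_scale | exact: IH].
Qed.

Lemma wf_in_m f : in_m f -> wf f.
Proof.
move=> [s [+ ->]]; elim: s => [|[h g] s IH] /=.
  by move=> _; exact: wf_zero.
by case/List.Forall_cons_iff => -[wh /wf_mgen wg] /IH; apply: wf_add; exact: wf_mul.
Qed.

(* Unlike a general element of m, the product of such a combination by an element of A is
   seen to lie in m by bilinearity alone, without associativity of sym_mul. *)
Definition mspan f : Prop := exists L : seq (C * Alg),
  List.Forall (fun x => mgen x.2) L /\ f = sym_sum [seq sym_scale x.1 x.2 | x <- L].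

Lemma in_m_mul_mspan h f : wf h -> mspan f -> in_m (sym_mul h f).
Proof.
move=> wh [L [+ ->]]; elim: L => [|[c g] L IH] /=; first by rewrite sym_mul0r => _; exact: in_m0.
case/List.Forall_cons_iff => /= hg L_gen; rewrite sym_mulDr sym_mulZr.
by apply: in_mD; [apply: in_m_mul_mgen; first exact: wf_scale | exact: IH].
Qed.

End IdealOfThePoint.

Section Superderivation.
Variable R : realType.
Local Notation Alg := (Alg R).
Local Notation sym_zero := (@sym_zero R).
Local Notation sym_one := (@sym_one R).
Variables (p : bool) (D : Alg -> Alg).
Hypothesis hD : superder p D.

Lemma superder0 : D sym_zero = sym_zero.
Proof.
case: hD => _ [_ [DZ _]]; rewrite -(sym_scale0 0) DZ; last exact: wf_zero.
by apply: functional_extensionality => m; rewrite /sym_scale !mul0r.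
Qed.

Lemma superder1 : D sym_one = sym_zero.
Proof.
case: hD => wD [_ [_ DM]].
have one_even : homog false sym_one.
  by move=> [E [|o O]]; rewrite sym_oneE //= andbF eqxx.
have w1 := wf_one R; have wD1 := wD _ w1; have := DM false _ _ w1 w1 one_even.
rewrite !sym_mulr1 // sym_mul1r // andbF expr0 => D1.
apply: functional_extensionality => m; have := congr1 (fun F => F m) D1.
by rewrite /sym_add /sym_scale mul1r -{1}[D sym_one m]addr0 => /addrI <-.
Qed.

Lemma superder_mgen_mspan :
  (forall k l, mspan (D (X R k l))) -> (forall k l, mspan (D (Y R k l))) ->
  forall g, mgen g -> mspan (D g).
Proof.
case: hD => _ [DD [DZ _]] DX DY g [[k [l ->]]|[k [l ->]]]; last exact: DY.
have w1 := wf_one R; rewrite DD ?DZ ?superder1 ?sym_scale0 ?sym_add0 //; first exact: wf_X.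
exact: wf_scale.
Qed.

Hypothesis D_mgen : forall g, mgen g -> mspan (D g).

Lemma superder_mul_mgen h g : wf h -> mgen g -> in_m (D (sym_mul h g)).
Proof.
case: hD => wD [DD [_ DM]] wh hg; have wg := wf_mgen hg.
have part_mul q : in_m (D (sym_mul (sym_part q h) g)).
  rewrite (DM q) //; [apply: in_mD | exact: wf_part | exact: homog_part].
    by apply: in_m_mul_mgen => //; apply: wD; exact: wf_part.
  by apply: in_mZ; apply: in_m_mul_mspan; [exact: wf_part | exact: D_mgen].
rewrite (sym_add_parts h) sym_mulDl DD; first exact: in_mD.
all: by apply: wf_mul => //; exact: wf_part.
Qed.

Lemma superder_in_m f : in_m f -> in_m (D f).
Proof.
case: hD => _ [DD _] [s [+ ->]]; elim: s => [|[h g] s IH] /=.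
  by rewrite superder0 => _; exact: in_m0.
case/List.Forall_cons_iff => -[wh hg] s_gen.
rewrite DD; [|exact: wf_mul (wf_mgen hg) | exact: wf_in_m (ex_intro _ s (conj s_gen erefl))].
by apply: in_mD; [exact: superder_mul_mgen | exact: IH].
Qed.

End Superderivation.

Section LinearForms.
Variable R : realType.
Local Notation C := (R[i]).
Local Notation sym_one := (@sym_one R).
Local Notation tens := (tens R).

Definition vanish_from (N : nat) (c : nat -> nat -> C) : Prop :=
  forall i j, (N <= i)%N || (N <= j)%N -> c i j = 0.

Lemma vanish_from_le M N (c : nat -> nat -> C) :
  (M <= N)%N -> vanish_from M c -> vanish_from N c.
Proof. by move=> MN cM i j ij; apply: cM; case/orP: ij => h; apply/orP; [left|right]; lia. Qed.

Lemma vanish_fromD N (c1 c2 : nat -> nat -> C) : vanish_from N c1 -> vanish_from N c2 ->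
  vanish_from N (fun i j => c1 i j + c2 i j).
Proof. by move=> h1 h2 i j ij; rewrite h1 // h2 // addr0. Qed.

Lemma vanish_fromZ N x (c : nat -> nat -> C) : vanish_from N c -> vanish_from N (fun i j => x * c i j).
Proof. by move=> h i j ij; rewrite h // mulr0. Qed.

Lemma vanish_fromN N (c : nat -> nat -> C) : vanish_from N c -> vanish_from N (fun i j => - c i j).
Proof. by move=> h i j ij; rewrite h // oppr0. Qed.

Lemma vanish_from_deltal N (c : nat -> nat -> C) k l : (k < N)%N -> vanish_from N c ->
  vanish_from N (fun i j => (i == k)%:R * c j l).
Proof.
move=> kN h i j /orP [iN|jN]; last by rewrite h ?jN // mulr0.
have /negbTE -> : i != k by apply: contraTneq iN => ->; rewrite -ltnNge.
by rewrite mul0r.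
Qed.

Lemma vanish_from_deltar N (c : nat -> nat -> C) k l : (l < N)%N -> vanish_from N c ->
  vanish_from N (fun i j => (j == l)%:R * c i k).
Proof.
move=> lN h i j /orP [iN|jN]; first by rewrite h ?iN // mulr0.
have /negbTE -> : j != l by apply: contraTneq jN => ->; rewrite -ltnNge.
by rewrite mul0r.
Qed.

Definition grid N : seq pidx := [seq (i, j) | i <- index_iota 0 N, j <- index_iota 0 N].

Lemma mem_grid N q : (q \in grid N) = (q.1 < N)%N && (q.2 < N)%N.
Proof.
case: q => i j; apply/allpairsP/andP => [[[i' j'] /=] [+ + [-> ->]]|[iN jN]].
  by rewrite !mem_index_iota.
by exists (i, j); rewrite !mem_index_iota.
Qed.

Lemma uniq_grid N : uniq (grid N).
Proof. by rewrite allpairs_uniq ?iota_uniq // => -[i j] [i' j'] _ _ [-> ->]. Qed.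

Lemma sum_grid_delta N (F : pidx -> C) q0 : (q0 \notin grid N -> F q0 = 0) ->
  \sum_(q <- grid N) F q * (q0 == q)%:R = F q0.
Proof.
have [q0_in _|q0_out /(_ isT) ->] := boolP (q0 \in grid N).
  rewrite (big_seq_only q0) ?uniq_grid ?eqxx ?mulr1 // => q _.
  by rewrite eq_sym => /negbTE ->; rewrite mulr0.
rewrite big1_seq // => q /andP [_ qin].
have /negbTE -> : q0 != q by apply: contraNneq q0_out => ->.
by rewrite mulr0.
Qed.

Lemma sum_nat_delta N l (F : nat -> C) :
  (l < N)%N -> \sum_(0 <= i < N) (i == l)%:R * F i = F l.
Proof.
move=> lN; rewrite (big_seq_only l) ?iota_uniq ?mem_index_iota ?eqxx ?mul1r // => i _.
by move=> /negbTE ->; rewrite mul0r.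
Qed.

Lemma sum_grid_diag N (F : nat -> nat -> C) :
  \sum_(q <- grid N) (q.1 == q.2)%:R * F q.1 q.2 = \sum_(0 <= i < N) F i i.
Proof.
rewrite big_allpairs big_seq [RHS]big_seq; apply: eq_bigr => i iN.
rewrite (big_seq_only i) ?iota_uniq //= ?eqxx ?mul1r // => j _.
by move=> /negbTE; rewrite eq_sym => ->; rewrite mul0r.
Qed.

Definition xcoef (t : tens) i j := t ((false, i), (false, j)).
Definition ycoef (t : tens) i j := t ((false, i), (true, j)).

Lemma iotaU_mspan zeta t N :
  vanish_from N (xcoef t) -> vanish_from N (ycoef t) ->
  \sum_(0 <= i < N) xcoef t i i = 0 -> mspan (iotaU zeta t).
Proof.
move=> xN yN tr0.
pose c (q : pidx) := xcoef t q.1 q.2 / (1 + zeta).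
pose d (q : pidx) := ycoef t q.1 q.2 / (1 + zeta).
have c_out q : q \notin grid N -> c q = 0.
  by case: q => i j; rewrite mem_grid negb_and -!leqNgt /c /= => /xN ->; rewrite mul0r.
have d_out q : q \notin grid N -> d q = 0.
  by case: q => i j; rewrite mem_grid negb_and -!leqNgt /d /= => /yN ->; rewrite mul0r.
exists ([seq (c q, sym_add (X R q.1 q.2) (sym_scale (- (q.1 == q.2)%:R) sym_one)) | q <- grid N]
        ++ [seq (d q, Y R q.1 q.2) | q <- grid N]); split.
  by apply/List.Forall_app; split; apply: Forall_map_all => q; [left | right]; exists q.1, q.2.
apply: functional_extensionality => m; rewrite sym_sumE map_cat big_cat !big_map /=.
rewrite /sym_scale /sym_add; under eq_bigr do rewrite mulrDr; rewrite big_split /=.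
(* the constant terms of the generators x_ii - 1 add up to the trace *)
have -> : \sum_(q <- grid N) c q * (- (q.1 == q.2)%:R * sym_one m) = 0.
  under eq_bigr do rewrite mulrCA mulNr mulrA.
  rewrite sumrN -mulr_suml (sum_grid_diag N (fun i j => xcoef t i j / (1 + zeta))).
  by rewrite -mulr_suml tr0 !mul0r oppr0.
rewrite addr0.
case: m => [[|e [|e' E]] [|o [|o' O]]]; rewrite /X /Y /=;
  try by rewrite !big1 ?addr0 // => q _; rewrite ?xpair_eqE ?eqseq_cons ?andbF ?mulr0.
- rewrite big1 ?add0r => [|q _]; last by rewrite mulr0.
  rewrite -[LHS]/(d o) -(sum_grid_delta (d_out o)); apply: eq_bigr => -[i j] _.
  by rewrite xpair_eqE eqseq_cons !eqxx !andbT.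
- rewrite addrC big1 ?add0r => [|q _]; last by rewrite mulr0.
  rewrite -[LHS]/(c e) -(sum_grid_delta (c_out e)); apply: eq_bigr => -[i j] _.
  by rewrite xpair_eqE eqseq_cons !eqxx !andbT.
Qed.

End LinearForms.

Section QueerAction.
Variable R : realType.
Local Notation C := (R[i]).
Local Notation qelt := (qelt R).
Variable zeta : C.
Implicit Types g : qelt.

Definition qfinitary g : Prop := finitary g.1 /\ finitary g.2.
Definition qvanish_from N g : Prop := vanish_from N g.1 /\ vanish_from N g.2.

Lemma qfinitary_bound g1 g2 k l : qfinitary g1 -> qfinitary g2 ->
  exists N, [/\ (k < N)%N, (l < N)%N, qvanish_from N g1 & qvanish_from N g2].
Proof.
move=> [[N1 h1] [N2 h2]] [[N3 h3] [N4 h4]].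
exists (maxn (maxn (maxn N1 N2) (maxn N3 N4)) (maxn k l).+1).
split; [lia | lia | split | split].
- by apply: (vanish_from_le _ h1); lia.
- by apply: (vanish_from_le _ h2); lia.
- by apply: (vanish_from_le _ h3); lia.
- by apply: (vanish_from_le _ h4); lia.
Qed.

Lemma xcoef_actV g1 g2 k l : xcoef (actV zeta g1 g2 k l) =
  fun i j => (1 + zeta) * ((j == l)%:R * g1.1 i k + (i == k)%:R * g2.1 j l).
Proof.
by do 2!apply: functional_extensionality => ?; rewrite /xcoef /actV /actB /qM /= !xpair_eqE /=; ring.
Qed.

Lemma ycoef_actV g1 g2 k l : ycoef (actV zeta g1 g2 k l) =
  fun i j => (1 + zeta) * ((i == k)%:R * - g2.2 j l) + (1 - zeta) * ((j == l)%:R * g1.2 i k).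
Proof.
by do 2!apply: functional_extensionality => ?; rewrite /ycoef /actV /actB /qM /= !xpair_eqE /=; ring.
Qed.

Lemma xcoef_actW g1 g2 k l : xcoef (actW zeta g1 g2 k l) =
  fun i j => (1 + zeta) * ((i == k)%:R * g2.2 j l) + (1 - zeta) * ((j == l)%:R * g1.2 i k).
Proof.
by do 2!apply: functional_extensionality => ?; rewrite /xcoef /actW /actB /qM /= !xpair_eqE /=; ring.
Qed.

Lemma ycoef_actW g1 g2 k l : ycoef (actW zeta g1 g2 k l) =
  fun i j => (1 + zeta) * ((j == l)%:R * g1.1 i k + (i == k)%:R * g2.1 j l).
Proof.
by do 2!apply: functional_extensionality => ?; rewrite /ycoef /actW /actB /qM /= !xpair_eqE /=; ring.
Qed.

Lemma actV_mspan N g1 g2 k l : (k < N)%N -> (l < N)%N ->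
  qvanish_from N g1 -> qvanish_from N g2 -> g1.1 l k + g2.1 k l = 0 ->
  mspan (iotaU zeta (actV zeta g1 g2 k l)).
Proof.
move=> kN lN [a1 b1] [a2 b2] tr; apply: (iotaU_mspan zeta (N := N)).
- rewrite xcoef_actV; apply: vanish_fromZ.
  by apply: vanish_fromD; [exact: vanish_from_deltar | exact: vanish_from_deltal].
- rewrite ycoef_actV; apply: vanish_fromD; apply: vanish_fromZ.
    exact: vanish_from_deltal kN (vanish_fromN b2).
  exact: vanish_from_deltar.
- by rewrite xcoef_actV -mulr_sumr big_split /= !sum_nat_delta // tr mulr0.
Qed.

Lemma actW_mspan N g1 g2 k l : (k < N)%N -> (l < N)%N ->
  qvanish_from N g1 -> qvanish_from N g2 -> (1 + zeta) * g2.2 k l + (1 - zeta) * g1.2 l k = 0 ->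
  mspan (iotaU zeta (actW zeta g1 g2 k l)).
Proof.
move=> kN lN [a1 b1] [a2 b2] tr; apply: (iotaU_mspan zeta (N := N)).
- rewrite xcoef_actW; apply: vanish_fromD; apply: vanish_fromZ.
    exact: vanish_from_deltal.
  exact: vanish_from_deltar.
- rewrite ycoef_actW; apply: vanish_fromZ.
  by apply: vanish_fromD; [exact: vanish_from_deltar | exact: vanish_from_deltal].
- by rewrite xcoef_actW big_split /= -!mulr_sumr !sum_nat_delta.
Qed.

(* Up to the factor 1 + zeta, the traces of the x-coefficients of (g1, g2).v_kl and
   (g1, g2).w_kl. *)
Definition traceless_action g1 g2 : Prop := forall k l,
  g1.1 l k + g2.1 k l = 0 /\ (1 + zeta) * g2.2 k l + (1 - zeta) * g1.2 l k = 0.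

Lemma superder_extending_in_m p D g1 g2 :
  superder p D -> extends_on_U zeta g1 g2 D -> qfinitary g1 -> qfinitary g2 ->
  traceless_action g1 g2 -> forall f, in_m f -> in_m (D f).
Proof.
move=> hD DU fin1 fin2 tr; apply: (superder_in_m hD); apply: (superder_mgen_mspan hD) => k l;
  have [N [kN lN g1N g2N]] := qfinitary_bound k l fin1 fin2; have [trV trW] := tr k l.
- by rewrite (DU k l).1; exact: actV_mspan kN lN g1N g2N trV.
- by rewrite (DU k l).2; exact: actW_mspan kN lN g1N g2N trW.
Qed.

Lemma qfinitary_tau g : qfinitary g -> qfinitary (tau zeta g).
Proof.
move=> [[N1 h1] [N2 h2]]; split; [exists N1 | exists N2] => i j ij /=.
  by rewrite h1 ?oppr0 // orbC.
by rewrite h2 ?mulr0 ?oppr0 // orbC.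
Qed.

Lemma qfinitary_qeven g : qfinitary g -> qfinitary (qeven g).
Proof. by case=> g1_fin _; split=> //; exists 0%N. Qed.

Lemma qfinitary_qodd g : qfinitary g -> qfinitary (qodd g).
Proof. by case=> _ g2_fin; split=> //; exists 0%N. Qed.

Lemma traceless_qeven g : traceless_action (qeven (tau zeta g)) (qeven g).
Proof. by move=> k l; rewrite /= addNr !mulr0 addr0. Qed.

Lemma traceless_qodd g : zeta ^+ 2 = -1 -> traceless_action (qodd (tau zeta g)) (qodd g).
Proof.
move=> zeta2 k l; split=> /=; first by rewrite addr0.
have -> x : (1 + zeta) * x + (1 - zeta) * - (zeta * x) = x * (1 + zeta ^+ 2) by ring.
by rewrite zeta2 subrr mulr0.
Qed.

End QueerAction.

Theorem proposition4p3 (R : realType) (zeta : R[i]) (hzeta : zeta ^+ 2 = -1)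
  (a b : nat -> nat -> R[i]) (ha : finitary a) (hb : finitary b)
  (D0 D1 : Alg R -> Alg R)
  (hD0 : superder false D0)
  (hD1 : superder true D1)
  (hD0U : extends_on_U zeta (qeven (tau zeta (a, b))) (qeven (a, b)) D0)
  (hD1U : extends_on_U zeta (qodd (tau zeta (a, b))) (qodd (a, b)) D1) :
  forall f : Alg R, in_m f -> in_m (sym_add (D0 f) (D1 f)).
Proof.
have fin_ab : qfinitary (a, b) by [].
move=> f hf; apply: in_mD.
- apply: (superder_extending_in_m hD0 hD0U) => //.
  + by apply: qfinitary_qeven; exact: qfinitary_tau.
  + exact: qfinitary_qeven.
  + exact: traceless_qeven.
- apply: (superder_extending_in_m hD1 hD1U) => //.
  + by apply: qfinitary_qodd; exact: qfinitary_tau.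
  + exact: qfinitary_qodd.
  + exact: traceless_qodd.
Qed.
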